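(* Let $F$ be a field of characteristic not $2$, $D$ a division quaternion algebra over $F$, and let $G=D^\times\times D^\times\times\mathrm{GL}_2$ act on $V=D\oplus D$ by $(x,y)\cdot\rho(g_1,g_2,g_3)=(g_1^{-1}xg_2,\,g_1^{-1}yg_2)g_3$. Then there are exactly two singular $G(F)$-orbits in $V(F)$ (orbits of elements $x$ with $P(x)=0$): the orbit of $(0,0)$ and the orbit of $(0,1)$.
   Context: Here $(x,y)g_3$ for $g_3=\left(\begin{smallmatrix}a&b\\c&d\end{smallmatrix}\right)$ means $(ax+cy,\,bx+dy)$. $x\mapsto x^\iota$ is the standard involution of $D$, and $P(x,y)=-\mathrm{Nrd}(xy^\iota-yx^\iota)$, where $\mathrm{Nrd}(z)=zz^\iota$ is the reduced norm. *)

From HB Require Import structures.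
From mathcomp Require Import all_boot all_order all_algebra.
Set Implicit Arguments. Unset Strict Implicit. Unset Printing Implicit Defensive.
Import GRing.Theory.
Local Open Scope ring_scope.

(* The quaternion algebra D = (a,b)_F over a field F (char F <> 2):
   F-basis 1, i, j, k with i^2 = a, j^2 = b, k = ij = -ji.
   Elements are x0 + x1 i + x2 j + x3 k. *)
Record quat (F : Type) := Quat { q0 : F; q1 : F; q2 : F; q3 : F }.

Section Quat.
Variables (F : fieldType) (a b : F).

Definition qzero : quat F := Quat 0 0 0 0.
Definition qone : quat F := Quat 1 0 0 0.

Definition qadd (x y : quat F) : quat F :=
  Quat (q0 x + q0 y) (q1 x + q1 y) (q2 x + q2 y) (q3 x + q3 y).
Definition qopp (x : quat F) : quat F :=
  Quat (- q0 x) (- q1 x) (- q2 x) (- q3 x).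
Definition qsub (x y : quat F) : quat F := qadd x (qopp y).
Definition qscale (c : F) (x : quat F) : quat F :=
  Quat (c * q0 x) (c * q1 x) (c * q2 x) (c * q3 x).

Definition qmul (x y : quat F) : quat F :=
  Quat (q0 x * q0 y + a * q1 x * q1 y + b * q2 x * q2 y - a * b * q3 x * q3 y)
       (q0 x * q1 y + q1 x * q0 y - b * q2 x * q3 y + b * q3 x * q2 y)
       (q0 x * q2 y + q2 x * q0 y + a * q1 x * q3 y - a * q3 x * q1 y)
       (q0 x * q3 y + q3 x * q0 y + q1 x * q2 y - q2 x * q1 y).

Definition qconj (x : quat F) : quat F :=
  Quat (q0 x) (- q1 x) (- q2 x) (- q3 x).

(* reduced norm: z z^iota, which is a scalar; we take its F-component *)
Definition nrd (z : quat F) : F := q0 (qmul z (qconj z)).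

Definition qunit (z : quat F) : Prop :=
  exists w, qmul z w = qone /\ qmul w z = qone.

Definition quat_division : Prop :=
  forall z : quat F, z <> qzero -> qunit z.

Definition Pform (v : quat F * quat F) : F :=
  - nrd (qsub (qmul v.1 (qconj v.2)) (qmul v.2 (qconj v.1))).

Definition i0 : 'I_2 := @Ordinal 2 0 isT.
Definition i1 : 'I_2 := @Ordinal 2 1 isT.

(* (x,y) . rho(g1,g2,g3) = (g1^{-1} x g2, g1^{-1} y g2) g3, where g1inv = g1^{-1}
   and (x,y) g3 = (a3 x + c3 y, b3 x + d3 y) for g3 = [[a3,b3],[c3,d3]]. *)
Definition rho_act (g1inv g2 : quat F) (g3 : 'M[F]_2) (v : quat F * quat F)
    : quat F * quat F :=
  let x' := qmul (qmul g1inv v.1) g2 in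
  let y' := qmul (qmul g1inv v.2) g2 in
  (qadd (qscale (g3 i0 i0) x') (qscale (g3 i1 i0) y'),
   qadd (qscale (g3 i0 i1) x') (qscale (g3 i1 i1) y')).

Definition G_orbit_mem (v w : quat F * quat F) : Prop :=
  exists (g1 g1inv g2 : quat F) (g3 : 'M[F]_2),
    [/\ qmul g1 g1inv = qone, qmul g1inv g1 = qone, qunit g2,
        \det g3 != 0 & w = rho_act g1inv g2 g3 v].
End Quat.
Arguments qzero F : clear implicits.
Arguments qone F : clear implicits.

(* A singular pair (x, y) satisfies Nrd(x y^iota - y x^iota) = 0, so in a division
   algebra x y^iota = y x^iota.  These two elements are conjugate, so x y^iota is
   fixed by the involution, i.e. it is a scalar t (char F <> 2).  If y <> 0 then
   Nrd(y) x = x y^iota y = t y, so (x, y) = (c y, y) is the image of (0, 1) under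
   g2 = y and a lower unitriangular g3; if y = 0 then (x, 0) is the image of (0, 1)
   under g2 = x and the swap matrix, unless x = 0.  Finally the action is linear,
   so the orbit of (0, 0) is a point. *)
From HB Require Import structures.
From mathcomp Require Import all_boot all_order all_algebra.
From mathcomp Require Import ring.
Set Implicit Arguments. Unset Strict Implicit. Unset Printing Implicit Defensive.
Local Open Scope ring_scope.
Import GRing.Theory.

Definition mx2 {F : fieldType} (p q r s : F) : 'M[F]_2 :=
  \matrix_(i < 2, j < 2) (if i == i0 then (if j == i0 then p else q)
                                   else (if j == i0 then r else s)).

Lemma det_mx2 (F : fieldType) (p q r s : F) : \det (mx2 p q r s) = p * s - q * r.
Proof.
rewrite (expand_det_row _ ord0) !big_ord_recl big_ord0 /cofactor !det_mx11 !mxE /=.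
by rewrite /bump /= expr0 expr1; ring.
Qed.

Section Quaternion.
Variables (F : fieldType) (a b : F).

Local Notation qmul := (qmul a b).
Local Notation nrd := (nrd a b).

Definition qscalar (c : F) : quat F := Quat c 0 0 0.

Lemma quat_ext (x y : quat F) :
  q0 x = q0 y -> q1 x = q1 y -> q2 x = q2 y -> q3 x = q3 y -> x = y.
Proof. by case: x => ????; case: y => ???? /= -> -> -> ->. Qed.

Ltac quat_ring := repeat match goal with x : quat F |- _ => case: x => ???? end;
  apply: quat_ext => /=; ring.

Lemma quat_eq0VN (x : quat F) : x = qzero F \/ x <> qzero F.
Proof.
case: x => x0 x1 x2 x3.
have [/and4P [/eqP-> /eqP-> /eqP-> /eqP->] | nx] :=
  boolP [&& x0 == 0, x1 == 0, x2 == 0 & x3 == 0]; [by left | right].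
by case=> e0 e1 e2 e3; rewrite e0 e1 e2 e3 !eqxx in nx.
Qed.

Lemma qone_neq0 : qone F <> qzero F.
Proof. by move=> [/eqP]; rewrite oner_eq0. Qed.

Lemma qmulA x y z : qmul (qmul x y) z = qmul x (qmul y z).
Proof. by quat_ring. Qed.

Lemma qmul1q x : qmul (qone F) x = x.
Proof. by quat_ring. Qed.

Lemma qmulq1 x : qmul x (qone F) = x.
Proof. by quat_ring. Qed.

Lemma qmul0q (x : quat F) : qmul (qzero F) x = qzero F.
Proof. by quat_ring. Qed.

Lemma qmul_scalarl c (x : quat F) : qmul (qscalar c) x = qscale c x.
Proof. by quat_ring. Qed.

Lemma qmul_scalarr c (x : quat F) : qmul x (qscalar c) = qscale c x.
Proof. by quat_ring. Qed.

Lemma qmulZl c (x y : quat F) : qmul (qscale c x) y = qscale c (qmul x y).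
Proof. by quat_ring. Qed.

Lemma qmulZr c (x y : quat F) : qmul x (qscale c y) = qscale c (qmul x y).
Proof. by quat_ring. Qed.

Lemma qscaleA c d (x : quat F) : qscale c (qscale d x) = qscale (c * d) x.
Proof. by quat_ring. Qed.

Lemma qscale1 (x : quat F) : qscale 1 x = x.
Proof. by quat_ring. Qed.

Lemma qscale0 (x : quat F) : qscale 0 x = qzero F.
Proof. by quat_ring. Qed.

Lemma qscalex0 (c : F) : qscale c (qzero F) = qzero F.
Proof. by quat_ring. Qed.

Lemma qadd0q (x : quat F) : qadd (qzero F) x = x.
Proof. by quat_ring. Qed.

Lemma qconjK (x : quat F) : qconj (qconj x) = x.
Proof. by quat_ring. Qed.

Lemma qconjM x y : qconj (qmul x y) = qmul (qconj y) (qconj x).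
Proof. by quat_ring. Qed.

Lemma qmul_conjl x : qmul (qconj x) x = qscalar (nrd x).
Proof. by rewrite /nrd; quat_ring. Qed.

Lemma qmul_conjr x : qmul x (qconj x) = qscalar (nrd x).
Proof. by rewrite /nrd; quat_ring. Qed.

Lemma qunit_nrd x : nrd x != 0 -> qunit a b x.
Proof.
move=> nx; exists (qscale (nrd x)^-1 (qconj x)).
by split; rewrite ?qmulZl ?qmulZr ?qmul_conjl ?qmul_conjr;
  apply: quat_ext => /=; rewrite ?mulr0 ?mulVf.
Qed.

Lemma qconj_eq0 (x : quat F) : qconj x = qzero F -> x = qzero F.
Proof. by move=> /(congr1 (@qconj F)); rewrite qconjK => ->; quat_ring. Qed.

Lemma nrd_eq0 x : quat_division a b -> nrd x = 0 -> x = qzero F.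
Proof.
move=> hdiv nx; have [// | /hdiv [w [xw _]]] := quat_eq0VN x; exfalso; apply: qone_neq0.
(* [x^iota = x^iota (x w) = Nrd(x) w = 0]. *)
have : qconj x = qzero F.
  by rewrite -[qconj x]qmulq1 -xw -qmulA qmul_conjl nx qmul_scalarl qscale0.
by move/qconj_eq0 => x0; rewrite -xw x0; quat_ring.
Qed.

Lemma qconj_fixed_scalar (x : quat F) :
  (2%:R : F) != 0 -> qsub x (qconj x) = qzero F -> x = qscalar (q0 x).
Proof.
case: x => x0 x1 x2 x3 h2 [_ e1 e2 e3]; rewrite /qscalar /=.
have half (t : F) : t - - t = 0 -> t = 0.
  by move/eqP; rewrite opprK -mulr2n -mulr_natl mulf_eq0 (negbTE h2) => /eqP.
by rewrite (half _ e1) (half _ e2) (half _ e3).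
Qed.

Lemma Pform_eq0_scalar x y :
  (2%:R : F) != 0 -> quat_division a b -> Pform a b (x, y) = 0 ->
  exists t, qmul x (qconj y) = qscalar t.
Proof.
move=> h2 hdiv /eqP; rewrite /Pform /= oppr_eq0 => /eqP /(nrd_eq0 hdiv).
by rewrite -{2}[y]qconjK -qconjM => /(qconj_fixed_scalar h2); exists (q0 (qmul x (qconj y))).
Qed.

Lemma qmul_conj_scalar x y t :
  qmul x (qconj y) = qscalar t -> nrd y != 0 -> x = qscale (t / nrd y) y.
Proof.
move=> xy ny; rewrite mulrC -qscaleA -[qscale t y]qmul_scalarl -xy qmulA qmul_conjl.
by rewrite qmul_scalarr qscaleA mulVf ?qscale1.
Qed.

Lemma rho_act_zero (g1inv g2 : quat F) (g3 : 'M[F]_2) :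
  rho_act a b g1inv g2 g3 (qzero F, qzero F) = (qzero F, qzero F).
Proof. by rewrite /rho_act; congr pair; quat_ring. Qed.

Lemma G_orbit_mem_zero (w : quat F * quat F) :
  G_orbit_mem a b (qzero F, qzero F) w -> w = (qzero F, qzero F).
Proof. by case=> [g1 [g1inv [g2 [g3 [_ _ _ _ ->]]]]]; rewrite rho_act_zero. Qed.

Lemma G_orbit_mem_refl (v : quat F * quat F) : G_orbit_mem a b v v.
Proof.
exists (qone F), (qone F), (qone F), (mx2 1 0 0 1).
split; rewrite ?qmul1q //.
- by exists (qone F); rewrite qmul1q.
- by rewrite det_mx2 mulr1 mulr0 subr0 oner_eq0.
- by case: v => x y; rewrite /rho_act !mxE /=; congr pair; quat_ring.
Qed.

Lemma G_orbit_mem_qone_scale (y : quat F) (c d : F) :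
  nrd y != 0 -> (c != 0) || (d != 0) ->
  G_orbit_mem a b (qzero F, qone F) (qscale c y, qscale d y).
Proof.
move=> ny cd.
have [g3 [g3c g3d det_g3]] : exists g3 : 'M[F]_2,
    [/\ g3 i1 i0 = c, g3 i1 i1 = d & \det g3 != 0].
  have [d0 | nd] := eqVneq d 0.
    exists (mx2 0 1 c d); rewrite det_mx2 !mxE d0 mulr0 mul1r sub0r oppr_eq0.
    by move: cd; rewrite d0 eqxx orbF.
  by exists (mx2 1 0 c d); rewrite det_mx2 !mxE mul1r mul0r subr0.
exists (qone F), (qone F), y, g3; split; rewrite ?qmul1q //; first exact: qunit_nrd.
by rewrite /rho_act /= g3c g3d !qmul1q qmul0q !qscalex0 !qadd0q.
Qed.

End Quaternion.

Theorem proposition2p2 (F : fieldType) (a b : F)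
  (hchar : (2%:R : F) != 0) (ha : a != 0) (hb : b != 0)
  (hdiv : quat_division a b) :
  [/\ Pform a b (qzero F, qzero F) = 0,
      Pform a b (qzero F, qone F) = 0,
      ~ G_orbit_mem a b (qzero F, qzero F) (qzero F, qone F)
    & forall v : quat F * quat F, Pform a b v = 0 ->
        G_orbit_mem a b (qzero F, qzero F) v \/ G_orbit_mem a b (qzero F, qone F) v].
Proof.
split.
- by rewrite /Pform /nrd /=; ring.
- by rewrite /Pform /nrd /=; ring.
- by move/G_orbit_mem_zero/(congr1 snd)/qone_neq0.
case=> x y /(Pform_eq0_scalar hchar hdiv) [t xy].
have [/(nrd_eq0 hdiv) -> | ny] := eqVneq (nrd a b y) 0.
  have [/(nrd_eq0 hdiv) -> | nx] := eqVneq (nrd a b x) 0.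
    by left; apply: G_orbit_mem_refl.
  right; have := G_orbit_mem_qone_scale (c := 1) (d := 0) nx.
  by rewrite qscale1 qscale0 oner_neq0; apply.
right; have := G_orbit_mem_qone_scale (c := t / nrd a b y) (d := 1) ny.
by rewrite qscale1 -(qmul_conj_scalar xy ny) oner_neq0 orbT; apply.
Qed.
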